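(* Let $\mathcal H=(M,n,\mathcal R)$ be a BMS, $x_0\in\mathbb R^n$ and $\gamma>0$. There exists an $\mathcal H$-closed convex polytope $P$ with $x_0\in P\subseteq \{y\in\mathbb R^n:\|y-x_0\|\le\gamma\}$ if and only if for every vector $v\in\mathbb R^n$ there is a mode $m\in M$ such that $v\cdot r\ge 0$ for all $r\in\mathcal R(m)$.
   Context: A multi-mode system is a tuple $\mathcal H=(M,n,\mathcal R)$ with $M$ a finite nonempty set of modes, $n\ge1$ variables, and $\mathcal R:M\to 2^{\mathbb R^n}$ giving nonempty rate sets; it is a BMS if each $\mathcal R(m)$ is a bounded convex polytope. A convex polytope $P\subseteq\mathbb R^n$ is $\mathcal H$-closed if for every vertex $c$ of $P$ there exist a mode $m\in M$ and $\tau>0$ such that $c+t\,r\in P$ for all $r\in\mathcal R(m)$ and all $t\in[0,\tau]$. $\|\cdot\|$ is the Euclidean norm and $\cdot$ the standard dot product. *)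

From mathcomp Require Import all_boot.
From Stdlib Require Import Reals.
Set Implicit Arguments. Unset Strict Implicit. Unset Printing Implicit Defensive.

Local Open Scope R_scope.

Definition vec (n : nat) := 'I_n -> R.

Definition vadd n (x y : vec n) : vec n := fun i => x i + y i.
Definition vscale n (t : R) (x : vec n) : vec n := fun i => t * x i.
Definition vsub n (x y : vec n) : vec n := fun i => x i - y i.

Definition dot n (x y : vec n) : R := \big[Rplus/0]_(i < n) (x i * y i).
Definition norm n (x : vec n) : R := sqrt (dot x x).

Definition convex_polytope n (P : vec n -> Prop) : Prop :=
  exists H : seq (vec n * R),
    forall x, P x <-> (forall h, List.In h H -> dot h.1 x <= h.2).

Definition bounded n (P : vec n -> Prop) : Prop :=
  exists rho : R, forall x, P x -> norm x <= rho.

Definition vertex n (P : vec n -> Prop) (c : vec n) : Prop :=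
  P c /\
  forall a b (t : R), P a -> P b -> 0 < t < 1 ->
    c = vadd (vscale (1 - t) a) (vscale t b) -> a = c /\ b = c.

Definition BMS (M : finType) (n : nat) (Rset : M -> vec n -> Prop) : Prop :=
  inhabited M /\ (1 <= n)%nat /\
  forall m, (exists r, Rset m r) /\ convex_polytope (Rset m) /\ bounded (Rset m).

Definition H_closed (M : finType) (n : nat) (Rset : M -> vec n -> Prop)
  (P : vec n -> Prop) : Prop :=
  forall c, vertex P c ->
    exists (m : M) (tau : R), 0 < tau /\
      forall r t, Rset m r -> 0 <= t <= tau -> P (vadd c (vscale t r)).

(* Necessity: v attains its minimum over the polytope at a vertex c, and any
   mode keeping the flow from c inside the polytope has rates with v . r >= 0.
   Sufficiency: let G list the vertices of all rate sets and take the zonotope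
   x0 + k * sum_j [-1, 1] g_j for small k > 0.  At a vertex every coefficient
   of a nonzero generator is +-1.  By Gordan's alternative, either some v has
   v . g_j < 0 for all generators with coefficient +1 -- then the mode of v
   only uses generators with coefficient -1 and its rates point into the
   zonotope -- or 0 is a convex combination of those generators, which
   contradicts extremality. *)

From HB Require Import structures.
From mathcomp Require Import all_boot zify.
From Stdlib Require Import Reals Lra Lia Classical ClassicalEpsilon FunctionalExtensionality.
From Stdlib Require List.

Set Implicit Arguments. Unset Strict Implicit. Unset Printing Implicit Defensive.
Local Open Scope R_scope.

(* Real addition and multiplication as monoid laws, so that the generic
   bigop lemmas (big_split, big_distrr, exchange_big, ...) apply to
   \big[Rplus/0]. *)
Lemma Rplus_assoc_law : associative Rplus.
Proof. by move=> *; rewrite Rplus_assoc. Qed.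
Lemma Rmult_plus_distr_l_law : left_distributive Rmult Rplus.
Proof. by move=> *; rewrite Rmult_plus_distr_r. Qed.
Lemma Rmult_plus_distr_r_law : right_distributive Rmult Rplus.
Proof. by move=> *; rewrite Rmult_plus_distr_l. Qed.
HB.instance Definition _ :=
  Monoid.isComLaw.Build R 0 Rplus Rplus_assoc_law Rplus_comm Rplus_0_l.
HB.instance Definition _ := Monoid.isMulLaw.Build R 0 Rmult Rmult_0_l Rmult_0_r.
HB.instance Definition _ :=
  Monoid.isAddLaw.Build R Rmult Rplus Rmult_plus_distr_l_law Rmult_plus_distr_r_law.

Lemma Rsum_le (I : finType) (f g : I -> R) :
  (forall i, f i <= g i) -> \big[Rplus/0]_(i : I) f i <= \big[Rplus/0]_(i : I) g i.
Proof. by move=> fg; apply: (big_ind2 (fun a b => a <= b)) => *; lra || apply: fg. Qed.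

Lemma Rsum_ge0 (I : finType) (f : I -> R) :
  (forall i, 0 <= f i) -> 0 <= \big[Rplus/0]_(i : I) f i.
Proof. by move=> f0; apply: (big_ind (fun a => 0 <= a)) => *; lra || apply: f0. Qed.

Lemma Rsum_ge_term (I : finType) (f : I -> R) j :
  (forall i, 0 <= f i) -> f j <= \big[Rplus/0]_(i : I) f i.
Proof.
move=> f0; rewrite (bigD1 j) //=.
have : 0 <= \big[Rplus/0]_(i | i != j) f i.
  by apply: (big_ind (fun a => 0 <= a)) => *; lra || apply: f0.
lra.
Qed.

Lemma Rsum1_term_le1 N (w : nat -> R) j :
  (forall q, 0 <= w q) -> \big[Rplus/0]_(q < N) w q = 1 -> (j < N)%nat -> w j <= 1.
Proof.
move=> w0 w1 jN; rewrite -w1.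
exact: (@Rsum_ge_term _ (fun q : 'I_N => w q) (Ordinal jN) (fun q => w0 q)).
Qed.

Lemma Rsum1_nonzero N (w : nat -> R) :
  \big[Rplus/0]_(j < N) w j = 1 -> exists j, (j < N)%nat /\ w j <> 0.
Proof.
move=> w1; apply: NNPP => all0.
have : \big[Rplus/0]_(j < N) w j = 0.
  rewrite big1 // => j _; apply: NNPP => wj; apply: all0; exists j; split => //.
lra.
Qed.

Lemma In_mem (T : eqType) (x : T) (s : seq T) : x \in s -> List.In x s.
Proof. by elim: s => [|a t IH] //=; rewrite in_cons => /orP [/eqP ->|/IH]; [left | right]. Qed.

Definition kron (k j : nat) : R := if j == k then 1 else 0.
Definition unitv n (i : 'I_n) : vec n := fun q => if q == i then 1 else 0.
Definition vzero n : vec n := fun _ => 0.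
Arguments vzero : clear implicits.

Lemma Rsum_kron N k (f : nat -> R) : (k < N)%nat ->
  \big[Rplus/0]_(j < N) (kron k j * f j) = f k.
Proof.
move=> kN; rewrite (bigD1 (Ordinal kN)) //= /kron eqxx big1; first ring.
move=> j jk; case: eqP => [e|_]; last ring.
by move: jk; rewrite (_ : j = Ordinal kN) ?eqxx //; apply: val_inj.
Qed.

Lemma dot_linr n a b (x y z : vec n) :
  dot z (fun i => a * x i + b * y i) = a * dot z x + b * dot z y.
Proof.
rewrite /dot !big_distrr -big_split /=; apply: eq_bigr => i _; ring.
Qed.

Lemma dot_comm n (x y : vec n) : dot x y = dot y x.
Proof. by apply: eq_bigr => i _; ring. Qed.

Lemma dot_linl n a b (x y z : vec n) :
  dot (fun i => a * x i + b * y i) z = a * dot x z + b * dot y z.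
Proof. by rewrite dot_comm dot_linr (dot_comm x) (dot_comm y). Qed.

Lemma dot_shift n (a x d : vec n) t :
  dot a (fun i => x i + t * d i) = dot a x + t * dot a d.
Proof.
rewrite -[dot a x]Rmult_1_l -dot_linr; congr dot.
by apply: functional_extensionality => i; ring.
Qed.

Lemma dot_sub n (a x y : vec n) : dot a (fun i => x i - y i) = dot a x - dot a y.
Proof.
rewrite (_ : (fun i => x i - y i) = (fun i => 1 * x i + -1 * y i)) ?dot_linr; first ring.
by apply: functional_extensionality => i; ring.
Qed.

Lemma dot_oppl n (a x : vec n) : dot (fun i => - a i) x = - dot a x.
Proof.
rewrite (_ : (fun i => - a i) = (fun i => -1 * a i + 0 * a i)) ?dot_linl; first ring.
by apply: functional_extensionality => i; ring.
Qed.

Lemma dot0l n (x : vec n) : dot (vzero n) x = 0.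
Proof. by rewrite /dot big1 // => i _; rewrite /vzero; ring. Qed.

Lemma dot_unitv n (i : 'I_n) (x : vec n) : dot (unitv i) x = x i.
Proof.
rewrite /dot (bigD1 i) //= /unitv eqxx big1 => [|j /negbTE ->]; ring.
Qed.

Lemma dot_sum n N (a : vec n) (w : nat -> R) (g : nat -> vec n) :
  dot a (fun i => \big[Rplus/0]_(j < N) (w j * g j i)) =
  \big[Rplus/0]_(j < N) (w j * dot a (g j)).
Proof.
rewrite /dot; under eq_bigr => i _ do rewrite big_distrr /=.
rewrite exchange_big /=; apply: eq_bigr => j _.
rewrite big_distrr /=; apply: eq_bigr => i _; ring.
Qed.

Lemma coord_sq_le_dot n (x : vec n) i : x i * x i <= dot x x.
Proof. by rewrite /dot; apply: (@Rsum_ge_term _ (fun i => x i * x i)) => j; nra. Qed.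

Lemma dot_self_ge0 n (x : vec n) : 0 <= dot x x.
Proof. by apply: Rsum_ge0 => i; nra. Qed.

Lemma dot_self_eq0 n (x : vec n) : dot x x = 0 -> x = vzero n.
Proof.
move=> x0; apply: functional_extensionality => i.
by have := coord_sq_le_dot x i; rewrite x0 /vzero => h; nra.
Qed.

Lemma coord_le_norm n (x : vec n) i : Rabs (x i) <= norm x.
Proof.
rewrite /norm -(sqrt_Rsqr (Rabs (x i))); last exact: Rabs_pos.
by apply: sqrt_le_1_alt; rewrite -Rsqr_abs; apply: coord_sq_le_dot.
Qed.

Lemma norm_le_l1 n (y : vec n) : norm y <= \big[Rplus/0]_(i < n) Rabs (y i).
Proof.
have [s0 sq] : 0 <= \big[Rplus/0]_(i < n) Rabs (y i) /\
    dot y y <= \big[Rplus/0]_(i < n) Rabs (y i) * \big[Rplus/0]_(i < n) Rabs (y i).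
  rewrite /dot; apply: (big_ind2 (fun a b => 0 <= b /\ a <= b * b)).
  - lra.
  - by move=> a1 a2 b1 b2 [? ?] [? ?]; split; nra.
  - move=> i _; split; first exact: Rabs_pos.
    by rewrite -Rabs_mult Rabs_pos_eq; [lra | nra].
by rewrite /norm -(sqrt_square (\big[Rplus/0]_(i < n) Rabs (y i))) //; apply: sqrt_le_1_alt.
Qed.

Definition Rltb (a b : R) : bool := if Rlt_dec a b then true else false.
Definition Reqb (a b : R) : bool := if Req_EM_T a b then true else false.

Lemma RltbP a b : Rltb a b = true <-> a < b.
Proof. by rewrite /Rltb; case: Rlt_dec. Qed.

Lemma ReqbP a b : Reqb a b = true <-> a = b.
Proof. by rewrite /Reqb; case: Req_EM_T. Qed.

Lemma list_argmin (A : Type) (f : A -> R) (a0 : A) (s : list A) :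
  List.In a0 s -> exists a, List.In a s /\ forall b, List.In b s -> f a <= f b.
Proof.
elim: s a0 => [|x t IH] a0 //= _.
case: t IH => [|y t] IH.
  by exists x; split; [left | move=> b [<-|[]]; lra].
have [a [aT amin]] := IH y (or_introl erefl).
case: (Rle_lt_dec (f x) (f a)) => xa.
- exists x; split; [by left | move=> b [<-|/amin]; lra].
- exists a; split; [by right | move=> b [<-|/amin]; lra].
Qed.

Lemma list_argmax (A : Type) (f : A -> R) (a0 : A) (s : list A) :
  List.In a0 s -> exists a, List.In a s /\ forall b, List.In b s -> f b <= f a.
Proof.
move=> /(list_argmin (fun a => - f a)) [a [aS amin]].
by exists a; split => // b /amin; lra.
Qed.

(* If every element of L lies below every element of U, some real lies
   between them; this is the one-variable case of Fourier-Motzkin. *)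
Lemma list_separate (L U : list R) :
  (forall a b, List.In a L -> List.In b U -> a <= b) ->
  exists lam, (forall a, List.In a L -> a <= lam) /\ (forall b, List.In b U -> lam <= b).
Proof.
case: L => [|a0 L] LU.
  case: U LU => [|b0 U] _; first by exists 0.
  have [b [_ bmin]] := list_argmin id (or_introl erefl : List.In b0 (b0 :: U)).
  by exists b.
have [a [aL amax]] := list_argmax id (or_introl erefl : List.In a0 (a0 :: L)).
by exists a; split => // b bU; apply: LU.
Qed.

(* Fourier-Motzkin elimination.  A constraint over x : vec n and auxiliary
   variables l_0, ..., l_(k-1) reads  ca . x + sum_(j<k) cc_j l_j <= cb. *)
Record cstr (n : nat) := Cstr { ca : vec n; cc : nat -> R; cb : R }.

Definition lhs n k (s : cstr n) (x : vec n) (l : nat -> R) : R :=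
  dot (ca s) x + \big[Rplus/0]_(j < k) (cc s j * l j).

Definition sat n k (S : list (cstr n)) (x : vec n) (l : nat -> R) : Prop :=
  forall s, List.In s S -> lhs k s x l <= cb s.

Lemma sat_cat n k (S1 S2 : list (cstr n)) x l :
  sat k (S1 ++ S2) x l <-> sat k S1 x l /\ sat k S2 x l.
Proof.
rewrite /sat; split => [S12|[S1l S2l] s /List.in_app_iff [/S1l|/S2l] //].
by split => s sS; apply: S12; apply/List.in_app_iff; [left | right].
Qed.

Lemma sat_map n k (A : Type) (f : A -> cstr n) (s : list A) x l :
  sat k (List.map f s) x l <-> forall a, List.In a s -> lhs k (f a) x l <= cb (f a).
Proof.
split => [Sl a aS|fl c /List.in_map_iff [a [<- /fl //]]].
exact/Sl/List.in_map.
Qed.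

Lemma lhs_succ n k (s : cstr n) x l : lhs k.+1 s x l = lhs k s x l + cc s k * l k.
Proof. by rewrite /lhs big_ord_recr /=; ring. Qed.

Lemma lhs_set n k (s : cstr n) x l lam :
  lhs k s x (fun j => if j == k then lam else l j) = lhs k s x l.
Proof.
congr (_ + _); apply: eq_bigr => j _.
by rewrite (_ : (j : nat) == k = false) // ltn_eqF.
Qed.

(* The positive combination of p (cc p k > 0) and q (cc q k < 0) that
   cancels the coefficient of l_k. *)
Definition comb n k (p q : cstr n) : cstr n :=
  Cstr (fun i => - cc q k * ca p i + cc p k * ca q i)
       (fun j => - cc q k * cc p j + cc p k * cc q j)
       (- cc q k * cb p + cc p k * cb q).

Lemma lhs_comb n k (p q : cstr n) x l :
  lhs k (comb k p q) x l = - cc q k * lhs k p x l + cc p k * lhs k q x l.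
Proof.
rewrite /lhs /comb /= dot_linl.
have -> : \big[Rplus/0]_(j < k) ((- cc q k * cc p j + cc p k * cc q j) * l j) =
    - cc q k * \big[Rplus/0]_(j < k) (cc p j * l j) +
    cc p k * \big[Rplus/0]_(j < k) (cc q j * l j).
  by rewrite !big_distrr -big_split; apply: eq_bigr => j _ /=; ring.
set Sp := \big[Rplus/0]_(j < k) _; set Sq := \big[Rplus/0]_(j < k) _; ring.
Qed.

Definition FMstep n k (S : list (cstr n)) : list (cstr n) :=
  List.filter (fun s => Reqb (cc s k) 0) S ++
  List.flat_map (fun p => List.map (comb k p) (List.filter (fun q => Rltb (cc q k) 0) S))
                (List.filter (fun p => Rltb 0 (cc p k)) S).

Lemma In_FMstep n k (S : list (cstr n)) s :
  List.In s (FMstep k S) <->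
  (List.In s S /\ cc s k = 0) \/
  exists p q, [/\ List.In p S, 0 < cc p k, List.In q S, cc q k < 0 & s = comb k p q].
Proof.
rewrite /FMstep List.in_app_iff List.filter_In List.in_flat_map ReqbP.
split => [[sk|[p [pS' sq]]]|[sk|[p [q [pS pk qS qk ->]]]]]; [by left | | by left |].
- move: pS' sq => /List.filter_In [pS /RltbP pk].
  move=> /List.in_map_iff [q [<- /List.filter_In [qS /RltbP qk]]].
  by right; exists p, q.
- right; exists p; split; first by apply/List.filter_In; split => //; apply/RltbP.
  by apply: List.in_map; apply/List.filter_In; split => //; apply/RltbP.
Qed.

Definition bnd n k (s : cstr n) x l : R := (cb s - lhs k s x l) / cc s k.

Lemma bnd_mulK n k (s : cstr n) x l : cc s k <> 0 ->
  bnd k s x l * cc s k = cb s - lhs k s x l.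
Proof. by move=> sk; rewrite /bnd; field. Qed.

Lemma bnd_upper n k (s : cstr n) x l lam : 0 < cc s k ->
  (lhs k s x l + cc s k * lam <= cb s <-> lam <= bnd k s x l).
Proof.
move=> sk; have e := @bnd_mulK n k s x l (Rgt_not_eq _ _ sk); split => h.
- by apply: (Rmult_le_reg_r (cc s k)) => //; rewrite e; lra.
- have : lam * cc s k <= bnd k s x l * cc s k by nra.
  by rewrite e; lra.
Qed.

Lemma bnd_lower n k (s : cstr n) x l lam : cc s k < 0 ->
  (lhs k s x l + cc s k * lam <= cb s <-> bnd k s x l <= lam).
Proof.
move=> sk; have e := @bnd_mulK n k s x l (Rlt_not_eq _ _ sk); split => h.
- apply: (Rmult_le_reg_r (- cc s k)); first lra.
  by rewrite Ropp_mult_distr_r_reverse e; lra.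
- have : lam * cc s k <= bnd k s x l * cc s k by nra.
  by rewrite e; lra.
Qed.

Lemma bnd_comb n k (p q : cstr n) x l : 0 < cc p k -> cc q k < 0 ->
  lhs k (comb k p q) x l <= cb (comb k p q) -> bnd k q x l <= bnd k p x l.
Proof.
rewrite lhs_comb /= => pk qk h.
have ep := @bnd_mulK n k p x l (Rgt_not_eq _ _ pk).
have eq := @bnd_mulK n k q x l (Rlt_not_eq _ _ qk).
apply: (Rmult_le_reg_r (cc p k * - cc q k)); first nra.
nra.
Qed.

Lemma FMstep_sound n k (S : list (cstr n)) x l :
  sat k.+1 S x l -> sat k (FMstep k S) x l.
Proof.
move=> Sl s /In_FMstep [[sS sk]|[p [q [pS pk qS qk ->]]]].
  by have := Sl s sS; rewrite lhs_succ sk; lra.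
have := Sl p pS; have := Sl q qS; rewrite lhs_comb /comb /= !lhs_succ => hq hp.
have e : - cc q k * lhs k p x l + cc p k * lhs k q x l =
  - cc q k * (lhs k p x l + cc p k * l k) + cc p k * (lhs k q x l + cc q k * l k) by ring.
by rewrite e; apply: Rplus_le_compat; apply: Rmult_le_compat_l => //; lra.
Qed.

Lemma FMstep_complete n k (S : list (cstr n)) x l :
  sat k (FMstep k S) x l -> exists l', sat k.+1 S x l'.
Proof.
move=> Sl.
pose bounds (P : cstr n -> bool) := List.map (fun s => bnd k s x l) (List.filter P S).
have sep : forall a b, List.In a (bounds (fun q => Rltb (cc q k) 0)) ->
    List.In b (bounds (fun p => Rltb 0 (cc p k))) -> a <= b.
  move=> a b /List.in_map_iff [q [<- /List.filter_In [qS /RltbP qk]]].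
  move=> /List.in_map_iff [p [<- /List.filter_In [pS /RltbP pk]]].
  by apply: bnd_comb => //; apply: Sl; apply/In_FMstep; right; exists p, q.
have [lam [lamL lamU]] := list_separate sep.
exists (fun j => if j == k then lam else l j) => s sS.
rewrite lhs_succ eqxx lhs_set.
case: (Rtotal_order (cc s k) 0) => [sk|[sk|sk]].
- apply/bnd_lower => //; apply: lamL; apply: List.in_map.
  by apply/List.filter_In; split => //; apply/RltbP.
- by rewrite sk Rmult_0_l Rplus_0_r; apply: Sl; apply/In_FMstep; left.
- apply/bnd_upper => //; apply: lamU; apply: List.in_map.
  by apply/List.filter_In; split => //; apply/RltbP.
Qed.

Fixpoint FMall n k (S : list (cstr n)) : list (cstr n) :=
  if k is k'.+1 then FMall k' (FMstep k' S) else S.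

Lemma FMall_correct n k (S : list (cstr n)) x :
  (exists l, sat k S x l) <-> (forall s, List.In s (FMall k S) -> dot (ca s) x <= cb s).
Proof.
have lhs0 : forall (s : cstr n) l, lhs 0 s x l = dot (ca s) x.
  by move=> s l; rewrite /lhs big_ord0 Rplus_0_r.
elim: k S => [|k IH] S /=.
  split => [[l Sl] s /Sl|Sx]; first by rewrite lhs0.
  by exists (fun _ => 0) => s /Sx; rewrite lhs0.
rewrite -IH; split => [[l /FMstep_sound Sl]|[l /FMstep_complete //]].
by exists l.
Qed.

Lemma projection_polytope n k (S : list (cstr n)) :
  convex_polytope (fun x => exists l, sat k S x l).
Proof.
exists (List.map (fun s => (ca s, cb s)) (FMall k S)) => x; rewrite FMall_correct.
split => [Sx h /List.in_map_iff [s [<- sS]]|Hx s sS]; first exact: Sx.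
exact: (Hx (ca s, cb s) (List.in_map _ _ _ sS)).
Qed.

Definition polyH n (H : seq (vec n * R)) (x : vec n) : Prop :=
  forall h, List.In h H -> dot h.1 x <= h.2.

Definition box_bounded n (P : vec n -> Prop) : Prop :=
  exists c rho, forall y, P y -> forall i, Rabs (y i - c i) <= rho.

Definition active n (x : vec n) (h : vec n * R) : bool := Reqb (dot h.1 x) h.2.

Definition tangent n (H : seq (vec n * R)) (x d : vec n) : Prop :=
  forall h, List.In h H -> dot h.1 x = h.2 -> dot h.1 d = 0.

(* A basic point: a point of the polyhedron whose active constraints admit
   no common tangent direction (the algebraic description of a vertex). *)
Definition basic n (H : seq (vec n * R)) (x : vec n) : Prop :=
  polyH H x /\ forall d, tangent H x d -> d = vzero n.

Lemma tangent_opp n (H : seq (vec n * R)) x d :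
  tangent H x d -> tangent H x (fun i => - d i).
Proof. by move=> dt h hH hx; rewrite dot_comm dot_oppl dot_comm (dt h hH hx); ring. Qed.

(* A nonzero direction from a point of a bounded polyhedron eventually leaves
   it, so some constraint increases strictly along it. *)
Lemma exit_constraint n (H : seq (vec n * R)) x d :
  box_bounded (polyH H) -> polyH H x -> d <> vzero n ->
  exists h, List.In h H /\ 0 < dot h.1 d.
Proof.
move=> [c [rho Hb]] Px dn; apply: NNPP => noexit.
have ray : forall t, 0 <= t -> polyH H (fun i => x i + t * d i).
  move=> t t0 h hH; rewrite dot_shift.
  have : dot h.1 d <= 0 by apply: Rnot_lt_le => hd; apply: noexit; exists h.
  by have := Px h hH; nra.
have [i di] : exists i, d i <> 0.
  apply: NNPP => d0; apply: dn; apply: functional_extensionality => i.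
  by apply: NNPP => di; apply: d0; exists i.
have dpos : 0 < Rabs (d i) by apply: Rabs_pos_lt.
have rho0 : 0 <= rho by have := Hb x Px i; have := Rabs_pos (x i - c i); lra.
pose t := (2 * rho + 1) / Rabs (d i).
have t0 : 0 <= t by apply: Rle_mult_inv_pos; lra.
have far : Rabs (t * d i) = 2 * rho + 1.
  by rewrite Rabs_mult Rabs_pos_eq // /t; field; lra.
have := Hb _ (ray t t0) i; have := Hb x Px i.
have := Rabs_triang (x i + t * d i - c i) (- (x i - c i)); rewrite Rabs_Ropp.
by rewrite (_ : x i + t * d i - c i + - (x i - c i) = t * d i); [lra | ring].
Qed.

Lemma count_lt_sub (A : Type) (p p' : pred A) (s : list A) :
  (forall a, List.In a s -> p' a -> p a) ->
  (exists a, List.In a s /\ p a /\ ~~ p' a) -> (count p' s < count p s)%nat.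
Proof.
have count_le : forall t : list A, (forall a, List.In a t -> p' a -> p a) ->
    (count p' t <= count p t)%nat.
  elim=> [|a t IH] //= sub; have := IH (fun b bt => sub b (or_intror bt)).
  by case pa': (p' a); [rewrite (sub a (or_introl erefl) pa') | case: (p a)] => /=; lia.
elim: s => [|a t IH] sub [b [bs [pb pb']]] //=.
have sub' : forall c, List.In c t -> p' c -> p c by move=> c ct; apply: sub; right.
case: bs => [ab|bt].
  by subst b; rewrite pb (negbTE pb') /=; have := count_le t sub'; lia.
have := IH sub' (ex_intro _ b (conj bt (conj pb pb'))).
by case pa': (p' a); [rewrite (sub a (or_introl erefl) pa') | case: (p a)] => /=; lia.
Qed.

Definition inactive_count n (H : seq (vec n * R)) (x : vec n) : nat :=
  count (fun h => ~~ active x h) H.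

(* Moving from x along a tangent direction that some constraint increases
   strictly, up to the first blocking constraint, stays in the polyhedron
   and makes one more constraint active. *)
Lemma move_to_new_face n (H : seq (vec n * R)) x d :
  polyH H x -> tangent H x d -> (exists h, List.In h H /\ 0 < dot h.1 d) ->
  exists t, 0 < t /\ polyH H (fun i => x i + t * d i) /\
    (inactive_count H (fun i => (x i + t * d i)%R) < inactive_count H x)%nat.
Proof.
move=> Px dt [h0 [h0H h0d]].
pose ratio (h : vec n * R) := (h.2 - dot h.1 x) / dot h.1 d.
pose Hp := List.filter (fun h => Rltb 0 (dot h.1 d)) H.
have inHp : forall h, List.In h Hp <-> List.In h H /\ 0 < dot h.1 d.
  by move=> h; rewrite List.filter_In RltbP.
have [hs [/inHp [hsH hsd] hsmin]] := list_argmin ratio (proj2 (inHp h0) (conj h0H h0d)).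
have slack : forall h, List.In h Hp -> 0 < ratio h.
  move=> h /inHp [hH hd]; apply: Rdiv_lt_0_compat => //.
  by case: (Px h hH) => [|e]; [lra | move: (dt h hH e); lra].
have hs0 : 0 < ratio hs by apply: slack; apply/inHp.
exists (ratio hs); split => //; split => [h hH|].
  rewrite dot_shift; case: (Rlt_le_dec 0 (dot h.1 d)) => hd; last by have := Px h hH; nra.
  have : ratio hs * dot h.1 d <= ratio h * dot h.1 d.
    by apply: Rmult_le_compat_r; [lra | apply: hsmin; apply/inHp].
  have -> : ratio h * dot h.1 d = h.2 - dot h.1 x by rewrite /ratio; field; lra.
  lra.
apply: count_lt_sub => [h hH|].
  move=> /negP nact; apply/negP => /ReqbP hx; apply: nact; apply/ReqbP.
  by rewrite dot_shift hx (dt h hH hx); ring.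
exists hs; split => //; split.
  by apply/negP => /ReqbP hx; move: (dt hs hsH hx); lra.
by rewrite negbK; apply/ReqbP; rewrite dot_shift /ratio; field; lra.
Qed.

(* The j-th member of a list of vectors (zero beyond its length), its linear
   combinations, and its convex combinations of members satisfying Q. *)
Definition gen n (G : list (vec n)) (j : nat) : vec n := List.nth j G (vzero n).

Lemma gen_In n (G : list (vec n)) (j : nat) : (j < length G)%nat -> List.In (gen G j) G.
Proof. by move=> /ltP jG; apply: List.nth_In. Qed.

Definition lincomb n (G : list (vec n)) (w : nat -> R) : vec n :=
  fun i => \big[Rplus/0]_(j < length G) (w j * gen G j i).

Definition convex_comb n (G : list (vec n)) (Q : vec n -> Prop) (x : vec n) : Prop :=
  exists w : nat -> R, [/\ forall j, 0 <= w j,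
    forall j, w j <> 0 -> Q (gen G j),
    \big[Rplus/0]_(j < length G) w j = 1 & x = lincomb G w].

Lemma lincomb_kron n (G : list (vec n)) j : (j < length G)%nat ->
  lincomb G (kron j) = gen G j.
Proof.
by move=> jG; apply: functional_extensionality => i;
   apply: (Rsum_kron (fun q => gen G q i)).
Qed.

Lemma lincomb_lin n (G : list (vec n)) a b s :
  lincomb G (fun j => a j + s * b j) = (fun i => lincomb G a i + s * lincomb G b i).
Proof.
apply: functional_extensionality => i.
by rewrite /lincomb big_distrr -big_split; apply: eq_bigr => j _ /=; ring.
Qed.

Lemma convex_comb_point n (G : list (vec n)) (Q : vec n -> Prop) x :
  List.In x G -> Q x -> convex_comb G Q x.
Proof.
move=> /(List.In_nth _ _ (vzero n)) [k [/ltP kG xk]] Qx.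
exists (kron k); split; first by move=> j; rewrite /kron; case: eqP; lra.
- by move=> j; rewrite /kron; case: eqP => [->|//]; rewrite /gen xk.
- by rewrite -(Rsum_kron (fun _ => 1) kG); apply: eq_bigr => j _; ring.
- by rewrite lincomb_kron.
Qed.

Lemma convex_comb_mix n (G : list (vec n)) (Q : vec n -> Prop) a b s :
  convex_comb G Q a -> convex_comb G Q b -> 0 <= s <= 1 ->
  convex_comb G Q (fun i => (1 - s) * a i + s * b i).
Proof.
move=> [wa [wa0 waQ wa1 ->]] [wb [wb0 wbQ wb1 ->]] s01.
exists (fun j => (1 - s) * wa j + s * wb j); split.
- by move=> j; have := wa0 j; have := wb0 j; nra.
- move=> j wj; case: (Req_EM_T (wa j) 0) => [wa_j|]; last exact: waQ.
  by apply: wbQ => wb_j; apply: wj; rewrite wa_j wb_j; ring.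
- by rewrite big_split -!big_distrr /= wa1 wb1; ring.
- apply: functional_extensionality => i.
  by rewrite /lincomb !big_distrr -big_split; apply: eq_bigr => j _ /=; ring.
Qed.

Lemma convex_comb_mono n (G : list (vec n)) (Q Q' : vec n -> Prop) x :
  (forall y, Q y -> Q' y) -> convex_comb G Q x -> convex_comb G Q' x.
Proof. by move=> QQ' [w [w0 wQ w1 xw]]; exists w; split => // j /wQ /QQ'. Qed.

Lemma nonbasic_split n (H : seq (vec n * R)) x :
  box_bounded (polyH H) -> polyH H x -> ~ basic H x ->
  exists y z s, [/\ polyH H y /\ (inactive_count H y < inactive_count H x)%nat,
    polyH H z /\ (inactive_count H z < inactive_count H x)%nat,
    0 <= s <= 1 & x = (fun i => (1 - s) * y i + s * z i)].
Proof.
move=> bnd Px nb.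
have [d [dt dn]] : exists d, tangent H x d /\ d <> vzero n.
  by apply: NNPP => nd; apply: nb; split => // d dt; apply: NNPP => dn; apply: nd; exists d.
have dn' : (fun i => - d i) <> vzero n.
  move=> e; apply: dn; apply: functional_extensionality => i.
  by have := f_equal (fun f => f i) e; rewrite /vzero; lra.
have [t1 [t1p [P1 L1]]] := move_to_new_face Px dt (exit_constraint bnd Px dn).
have [t2 [t2p [P2 L2]]] :=
  move_to_new_face Px (tangent_opp dt) (exit_constraint bnd Px dn').
exists (fun i => x i + t1 * d i), (fun i => x i + t2 * - d i), (t1 / (t1 + t2)).
split => //.
- split; first by apply: Rle_mult_inv_pos; lra.
  by apply: (Rmult_le_reg_r (t1 + t2)); [lra | field_simplify; lra].
- by apply: functional_extensionality => i; field; lra.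
Qed.

(* Finite-dimensional Krein-Milman theorem for polytopes: every point of a
   bounded polyhedron is a convex combination of its basic points (by strong
   induction on the number of inactive constraints). *)
Lemma polytope_convex_basic n (H : seq (vec n * R)) (G : list (vec n)) :
  box_bounded (polyH H) -> (forall x, basic H x -> List.In x G) ->
  forall x, polyH H x -> convex_comb G (polyH H) x.
Proof.
move=> bnd HG x; move: {-1}(inactive_count H x) (erefl (inactive_count H x)) => k.
elim/ltn_ind: k x => k IH x xk Px.
case: (classic (basic H x)) => [/HG xG|nb]; first exact: convex_comb_point.
have [y [z [s [[Py yx] [Pz zx] s01 ->]]]] := nonbasic_split bnd Px nb.
by apply: convex_comb_mix => //; [apply: (IH _ _ y erefl) | apply: (IH _ _ z erefl)];
   rewrite -?xk.
Qed.

Lemma basic_unique n (H : seq (vec n * R)) x y : basic H x -> basic H y ->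
  List.filter (active x) H = List.filter (active y) H -> x = y.
Proof.
move=> [Px bx] [Py _] same.
have dxy : tangent H x (fun i => x i - y i).
  move=> h hH hx.
  have : List.In h (List.filter (active x) H) by apply/List.filter_In; split => //; apply/ReqbP.
  rewrite same => /List.filter_In [_ /ReqbP hy].
  by rewrite dot_sub hx hy; ring.
apply: functional_extensionality => i.
by have := f_equal (fun f => f i) (bx _ dxy); rewrite /vzero; lra.
Qed.

Fixpoint sublists (A : Type) (s : list A) : list (list A) :=
  if s is a :: t then List.map (cons a) (sublists t) ++ sublists t else [:: nil].

Lemma filter_in_sublists (A : Type) (f : A -> bool) s :
  List.In (List.filter f s) (sublists s).
Proof.
elim: s => [|a t IH] /=; first by left.
by rewrite List.in_app_iff; case: (f a); [left; apply: List.in_map | right].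
Qed.

(* A polyhedron has finitely many basic points: at most one per sublist of
   constraints. *)
Lemma basic_finite n (H : seq (vec n * R)) :
  exists V : list (vec n), forall x, basic H x <-> List.In x V.
Proof.
pose witness (L : list (vec n * R)) : list (vec n) :=
  match excluded_middle_informative
          (exists y, basic H y /\ List.filter (active y) H = L) with
  | left e => [:: proj1_sig (constructive_indefinite_description _ e)]
  | right _ => nil end.
exists (List.flat_map witness (sublists H)) => x; rewrite List.in_flat_map; split.
- move=> bx; exists (List.filter (active x) H); split; first exact: filter_in_sublists.
  rewrite /witness; case: excluded_middle_informative => [e|[]]; last by exists x.
  case: constructive_indefinite_description => y [yb ey] /=; left.
  exact: (basic_unique yb bx ey).
- move=> [L [_]]; rewrite /witness; case: excluded_middle_informative => // e.
  by case: constructive_indefinite_description => y [yb _] /= [<-|].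
Qed.

Lemma basic_vertex n (H : seq (vec n * R)) (P : vec n -> Prop) c :
  (forall x, P x <-> polyH H x) -> basic H c -> vertex P c.
Proof.
move=> HP [Pc bc]; split => [|a b t /HP Pa /HP Pb t01 ec]; first exact/HP.
have tight : forall y, polyH H y ->
    (forall h, List.In h H -> dot h.1 c = h.2 -> dot h.1 y = h.2) -> y = c.
  move=> y Py hy.
  have dyc : tangent H c (fun i => y i - c i).
    by move=> h hH hc; rewrite dot_sub (hy h hH hc) hc; ring.
  apply: functional_extensionality => i.
  by have := f_equal (fun f => f i) (bc _ dyc); rewrite /vzero; lra.
have both : forall h, List.In h H -> dot h.1 c = h.2 -> dot h.1 a = h.2 /\ dot h.1 b = h.2.
  move=> h hH hc; have := Pa h hH; have := Pb h hH.
  by rewrite ec /vadd /vscale dot_linr in hc; split; nra.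
by split; apply: tight => // h hH /(both h hH) [].
Qed.

Lemma polytope_min_vertex n (P : vec n -> Prop) (v : vec n) x0 :
  convex_polytope P -> box_bounded P -> P x0 ->
  exists c, vertex P c /\ forall x, P x -> dot v c <= dot v x.
Proof.
move=> [H HP] bndP Px0; have [V HV] := basic_finite H.
have bnd : box_bounded (polyH H).
  by have [c [rho Hb]] := bndP; exists c, rho => y /HP; apply: Hb.
have KM := polytope_convex_basic bnd (fun x => proj1 (HV x)).
have [w [w0 _ w1 _]] := KM x0 (proj1 (HP x0) Px0).
have [j0 [j0V _]] := Rsum1_nonzero w1.
have [c [cV cmin]] := list_argmin (dot v) (gen_In j0V).
exists c; split; first by apply: (basic_vertex HP); apply/HV.
move=> x /HP /KM [u [u0 _ u1 ->]].
rewrite /lincomb (dot_sum _ v u (gen V)).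
rewrite -[dot v c]Rmult_1_l -u1 big_distrl /=; apply: Rsum_le => j.
apply: Rmult_le_compat_l => //; apply: cmin.
exact: gen_In (ltn_ord j).
Qed.

(* Gordan's alternative for the selected vectors g_j (sel j, j < N): either
   some v makes an obtuse angle with all of them, or 0 is a convex
   combination of them.  Proof by induction on N. *)
Definition separable n N (g : nat -> vec n) (sel : pred nat) : Prop :=
  exists v : vec n, forall j, (j < N)%nat -> sel j -> dot v (g j) < 0.

Definition zero_in_hull n N (g : nat -> vec n) (sel : pred nat) : Prop :=
  exists mu : nat -> R, [/\ forall j, 0 <= mu j,
    forall j, mu j <> 0 -> sel j /\ (j < N)%nat,
    \big[Rplus/0]_(j < N) mu j = 1 &
    forall i, \big[Rplus/0]_(j < N) (mu j * g j i) = 0].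

Lemma separable_succ n N (g : nat -> vec n) (sel : pred nat) v :
  (forall j, (j < N)%nat -> sel j -> dot v (g j) < 0) ->
  (sel N -> dot v (g N) < 0) -> separable N.+1 g sel.
Proof.
by move=> vN vl; exists v => j; rewrite ltnS leq_eqVlt => /orP [/eqP ->|/vN] //.
Qed.

Lemma zero_in_hull_succ n N (g : nat -> vec n) (sel : pred nat) :
  zero_in_hull N g sel -> zero_in_hull N.+1 g sel.
Proof.
move=> [mu [mu0 musel mu1 mug]].
have muN : mu N = 0 by apply: NNPP => /musel [_]; rewrite ltnn.
exists mu; split => //.
- by move=> j /musel [? ?]; split => //; lia.
- by rewrite big_ord_recr /= muN mu1; ring.
- by move=> i; rewrite big_ord_recr /= muN mug; ring.
Qed.

Lemma gordan_last n N (g : nat -> vec n) (sel : pred nat) :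
  (forall j, (j < N)%nat -> ~~ sel j) ->
  separable N.+1 g sel \/ zero_in_hull N.+1 g sel.
Proof.
move=> none.
have vN : forall (v : vec n) j, (j < N)%nat -> sel j -> dot v (g j) < 0.
  by move=> v j /none /negP.
case selN: (sel N); last by left; apply: (separable_succ (vN (vzero n))); rewrite selN.
case: (classic (g N = vzero n)) => [gN0|gN].
- right; exists (kron N); split.
  + by move=> j; rewrite /kron; case: eqP; lra.
  + by move=> j; rewrite /kron; case: eqP => // -> _.
  + by rewrite -(Rsum_kron (fun _ => 1) (ltnSn N)); apply: eq_bigr => j _; ring.
  + by move=> i; have /= -> := Rsum_kron (fun j => g j i) (ltnSn N); rewrite gN0.
- left; apply: (separable_succ (vN (fun i => - g N i))) => _.
  rewrite dot_oppl; case: (dot_self_ge0 (g N)) => [|/esym/dot_self_eq0 //]; lra.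
Qed.

Lemma convex_sum_pos N (mu c : nat -> R) :
  (forall j, 0 <= mu j) -> \big[Rplus/0]_(j < N) mu j = 1 ->
  (forall j, (j < N)%nat -> mu j <> 0 -> 0 < c j) ->
  0 < \big[Rplus/0]_(j < N) (mu j * c j).
Proof.
move=> mu0 mu1 cpos; have [j [jN muj]] := Rsum1_nonzero mu1.
have term0 : forall q : 'I_N, 0 <= mu q * c q.
  move=> q; case: (Req_EM_T (mu q) 0) => [->|muq]; first lra.
  by have := cpos q (ltn_ord q) muq; have := mu0 q; nra.
have := @Rsum_ge_term _ (fun q : 'I_N => mu q * c q) (Ordinal jN) term0.
by have := cpos j jN muj; have := mu0 j => /= ? ? ?; nra.
Qed.

(* The vectors g_j corrected along a so that v no longer sees them:
   v . gproj v a g j = 0. *)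
Definition gproj n (v a : vec n) (g : nat -> vec n) : nat -> vec n :=
  fun j i => dot v a * g j i + - dot v (g j) * a i.

Lemma dot_gproj n (w v a : vec n) g j :
  dot w (gproj v a g j) = dot v a * dot w (g j) - dot v (g j) * dot w a.
Proof. by rewrite /gproj dot_linr; ring. Qed.

(* Induction step, separable case: v separates the first N selected
   vectors but not g_N, and w separates their corrections; a suitable
   combination of w and v separates all N+1 vectors. *)
Lemma separable_lift n N (g : nat -> vec n) (sel : pred nat) v j0 :
  (forall j, (j < N)%nat -> sel j -> dot v (g j) < 0) ->
  (j0 < N)%nat -> sel j0 -> 0 <= dot v (g N) ->
  separable N (gproj v (g N) g) sel -> separable N.+1 g sel.
Proof.
move=> vsep j0N j0sel al0 [w wsep].
set al := dot v (g N) in al0 *.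
pose ratio j := dot w (g j) / (- dot v (g j)).
have ratioK : forall j, (j < N)%nat -> sel j -> ratio j * - dot v (g j) = dot w (g j).
  by move=> j jN sj; rewrite /ratio; field; have := vsep j jN sj; lra.
have inJs : forall j, List.In j (List.filter sel (List.seq 0 N)) <-> (j < N)%nat /\ sel j.
  by move=> j; rewrite List.filter_In List.in_seq; split => -[h1 h2]; split => //; lia.
have [js [/inJs [jsN jssel] jsmax]] := list_argmax ratio (proj2 (inJs j0) (conj j0N j0sel)).
set S := ratio js.
have key : al * S < - dot w (g N).
  have := wsep js jsN jssel; rewrite dot_gproj -/al => h.
  have := vsep js jsN jssel; have := ratioK js jsN jssel; rewrite -/S => eS vjs.
  by apply: (Rmult_lt_reg_r (- dot v (g js))); [lra | nra].
set del := (- dot w (g N) - al * S) / (al + 1).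
have del0 : 0 < del by apply: Rdiv_lt_0_compat; lra.
have aldel : al * del < - dot w (g N) - al * S.
  have e : del * (al + 1) = - dot w (g N) - al * S by rewrite /del; field; lra.
  by nra.
apply: (@separable_succ _ _ _ _ (fun i => 1 * w i + (S + del) * v i)) => [j jN sj|_].
  rewrite dot_linl; have := jsmax j (proj2 (inJs j) (conj jN sj)); rewrite -/S.
  by have := ratioK j jN sj; have := vsep j jN sj; nra.
by rewrite dot_linl -/al; nra.
Qed.

(* Induction step, dual case: 0 is a convex combination of the corrected
   vectors; reweighting with g_N gives 0 as a combination of the g_j. *)
Lemma zero_in_hull_lift n N (g : nat -> vec n) (sel : pred nat) v :
  (forall j, (j < N)%nat -> sel j -> dot v (g j) < 0) ->
  0 <= dot v (g N) -> sel N ->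
  zero_in_hull N (gproj v (g N) g) sel -> zero_in_hull N.+1 g sel.
Proof.
move=> vsep al0 selN [mu [mu0 musel mu1 mug]].
set al := dot v (g N) in al0 mug.
set S := \big[Rplus/0]_(j < N) (mu j * - dot v (g j)).
have S0 : 0 < S.
  apply: (@convex_sum_pos N mu (fun j => - dot v (g j))) => // j jN /musel [sj _].
  by have := vsep j jN sj; lra.
have T0 : 0 < al + S by lra.
pose mu' j := if j == N then S / (al + S) else al * mu j / (al + S).
have mu'N : forall j : 'I_N, mu' j = al / (al + S) * mu j.
  by move=> j; rewrite /mu' (ltn_eqF (ltn_ord j)); field; lra.
exists mu'; split.
- move=> j; rewrite /mu'; case: eqP => _; apply: Rle_mult_inv_pos => //; first lra.
  by have := mu0 j; nra.
- move=> j; rewrite /mu'; case: eqP => [-> //|_ mu'j].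
  have muj : mu j <> 0 by move=> e; apply: mu'j; rewrite e; field; lra.
  by have [sj jN] := musel j muj; split => //; lia.
- rewrite big_ord_recr; under eq_bigr => j _ do rewrite mu'N.
  by rewrite -big_distrr /= mu1 /mu' eqxx; field; lra.
- move=> i; rewrite big_ord_recr; under eq_bigr => j _ do rewrite mu'N.
  have comb : al * \big[Rplus/0]_(j < N) (mu j * g j i) + S * g N i = 0.
    rewrite -[RHS](mug i) /S big_distrr big_distrl -big_split /=.
    by apply: eq_bigr => j _; rewrite /gproj -/al; ring.
  rewrite /mu' eqxx.
  have -> : \big[Rplus/0]_(j < N) (al / (al + S) * mu j * g j i) =
      al / (al + S) * \big[Rplus/0]_(j < N) (mu j * g j i).
    by rewrite big_distrr; apply: eq_bigr => j _ /=; ring.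
  set C := \big[Rplus/0]_(j < N) _ in comb *; rewrite /=.
  have -> : al / (al + S) * C + S / (al + S) * g N i = (al * C + S * g N i) / (al + S).
    by field; lra.
  by rewrite comb; field; lra.
Qed.

Lemma gordan n N (g : nat -> vec n) (sel : pred nat) :
  separable N g sel \/ zero_in_hull N g sel.
Proof.
elim: N g => [|N IH] g; first by left; exists (vzero n).
case: (classic (exists j, (j < N)%nat /\ sel j)) => [[j0 [j0N j0sel]]|none]; last first.
  by apply: gordan_last => j jN; apply/negP => sj; apply: none; exists j.
case: (IH g) => [[v vsep]|z]; last by right; apply: zero_in_hull_succ.
case selN: (sel N); last by left; apply: (separable_succ vsep); rewrite selN.
case: (Rlt_le_dec (dot v (g N)) 0) => al0; first by left; apply: (separable_succ vsep).
case: (IH (gproj v (g N) g)) => [sep|z].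
- by left; apply: (separable_lift vsep j0N j0sel al0 sep).
- by right; apply: (zero_in_hull_lift vsep al0 selN z).
Qed.

Section Zonotope.
Variables (n : nat) (x0 : vec n) (k : R) (G : list (vec n)).

Definition zpt (l : nat -> R) : vec n := fun i => x0 i + k * lincomb G l i.

Definition admissible (l : nat -> R) : Prop :=
  forall j, (j < length G)%nat -> -1 <= l j <= 1.

Definition zonotope (x : vec n) : Prop := exists l, admissible l /\ x = zpt l.

(* The zonotope is the projection of a system of linear constraints in
   (x, l): x_i - k sum_j l_j g_j i = x0 i (two inequalities) and
   -1 <= l_j <= 1. *)
Definition coord_le (i : 'I_n) : cstr n :=
  Cstr (unitv i) (fun j => - k * gen G j i) (x0 i).
Definition coord_ge (i : 'I_n) : cstr n :=
  Cstr (fun q => - unitv i q) (fun j => k * gen G j i) (- x0 i).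
Definition coef_le (j : nat) : cstr n := Cstr (vzero n) (kron j) 1.
Definition coef_ge (j : nat) : cstr n := Cstr (vzero n) (fun q => - kron j q) 1.

Definition zonotope_system : list (cstr n) :=
  List.map coord_le (enum 'I_n) ++ List.map coord_ge (enum 'I_n) ++
  List.map coef_le (List.seq 0 (length G)) ++ List.map coef_ge (List.seq 0 (length G)).

Lemma lhs_coord_le i x l : lhs (length G) (coord_le i) x l = x i - k * lincomb G l i.
Proof.
rewrite /lhs /= dot_unitv /lincomb (_ : forall a b, a - k * b = a + - k * b); last first.
  by move=> a b; ring.
by rewrite big_distrr; congr (_ + _); apply: eq_bigr => j _ /=; ring.
Qed.

Lemma lhs_coord_ge i x l : lhs (length G) (coord_ge i) x l = - x i + k * lincomb G l i.
Proof.
rewrite /lhs /= dot_oppl dot_unitv /lincomb.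
by rewrite big_distrr; congr (_ + _); apply: eq_bigr => j _ /=; ring.
Qed.

Lemma lhs_coef_le j x l : (j < length G)%nat -> lhs (length G) (coef_le j) x l = l j.
Proof. by move=> jN; rewrite /lhs /= dot0l Rplus_0_l Rsum_kron. Qed.

Lemma lhs_coef_ge j x l : (j < length G)%nat -> lhs (length G) (coef_ge j) x l = - l j.
Proof.
move=> jN; rewrite /lhs /= dot0l Rplus_0_l -(Rsum_kron (fun q => - l q) jN).
by apply: eq_bigr => q _; ring.
Qed.

Lemma sat_zonotope_system x l :
  sat (length G) zonotope_system x l <-> admissible l /\ x = zpt l.
Proof.
have inseq : forall j, List.In j (List.seq 0 (length G)) <-> (j < length G)%nat.
  by move=> j; rewrite List.in_seq; lia.
have inI : forall i : 'I_n, List.In i (enum 'I_n) by move=> i; apply: In_mem; rewrite mem_enum.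
rewrite !sat_cat !sat_map; split => [[xle [xge [lle lge]]]|[lad ->]].
- split => [j jN|].
    have := lle j (proj2 (inseq j) jN); have := lge j (proj2 (inseq j) jN).
    by rewrite lhs_coef_le // lhs_coef_ge //=; lra.
  apply: functional_extensionality => i; rewrite /zpt.
  by have := xle i (inI i); have := xge i (inI i); rewrite lhs_coord_le lhs_coord_ge /=; lra.
- split => [i _|]; first by rewrite lhs_coord_le /zpt /=; lra.
  split => [i _|]; first by rewrite lhs_coord_ge /zpt /=; lra.
  split => j /inseq jN; [rewrite lhs_coef_le | rewrite lhs_coef_ge] => //=;
    case: (lad j jN) => ? ?; lra.
Qed.

Lemma zonotope_polytope : convex_polytope zonotope.
Proof.
have [H HP] := projection_polytope (length G) zonotope_system.
exists H => x; rewrite -HP; split => [[l [lad ->]]|[l /sat_zonotope_system [lad ->]]].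
  by exists l; apply/sat_zonotope_system.
by exists l.
Qed.

Lemma zonotope_norm y : 0 <= k -> zonotope y ->
  norm (vsub y x0) <= k * \big[Rplus/0]_(j < length G) \big[Rplus/0]_(i < n) Rabs (gen G j i).
Proof.
move=> k0 [l [lad ->]]; apply: Rle_trans (norm_le_l1 _) _.
rewrite exchange_big /= big_distrr /=; apply: Rsum_le => i.
rewrite /vsub /zpt (_ : x0 i + k * lincomb G l i - x0 i = k * lincomb G l i); last ring.
rewrite Rabs_mult Rabs_pos_eq //; apply: Rmult_le_compat_l => //.
rewrite /lincomb; apply: (big_ind2 (fun a b => Rabs a <= b)).
- by rewrite Rabs_R0; lra.
- by move=> a1 a2 b1 b2 h1 h2; apply: Rle_trans (Rabs_triang _ _) _; lra.
- move=> j _; rewrite Rabs_mult.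
  have : Rabs (l j) <= 1 by apply: Rabs_le; have := lad j (ltn_ord j); lra.
  by have := Rabs_pos (gen G j i); have := Rabs_pos (l j); nra.
Qed.

Lemma zpt_shift l m s : zpt (fun q => l q + s * m q) = fun i => zpt l i + k * s * lincomb G m i.
Proof. by apply: functional_extensionality => i; rewrite /zpt lincomb_lin; ring. Qed.

Hypothesis k_pos : 0 < k.

(* At a vertex, every representing coefficient of a nonzero generator is
   extreme: otherwise c would be the midpoint of c +- k s g_j. *)
Lemma vertex_extreme_coef c l j : vertex zonotope c -> admissible l -> c = zpt l ->
  (j < length G)%nat -> gen G j <> vzero n -> l j = 1 \/ l j = -1.
Proof.
move=> [_ cext] lad cl jN gj; apply: NNPP => notext.
have [lo hi] : -1 < l j /\ l j < 1.
  have := lad j jN => lj.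
  split; apply: Rnot_le_lt => h; apply: notext; lra.
pose s := Rmin (1 - l j) (l j + 1).
have s0 : 0 < s by apply: Rmin_glb_lt; lra.
have [s1 s2] : s <= 1 - l j /\ s <= l j + 1 by split; [apply: Rmin_l | apply: Rmin_r].
have shift_ok : forall e, -1 <= e <= 1 -> admissible (fun q => l q + e * s * kron j q).
  move=> e e1 q qN; rewrite /kron; case: eqP => [->|_]; first by nra.
  by have := lad q qN; lra.
pose shifted e := zpt (fun q => l q + e * s * kron j q).
have Zsh : forall e, -1 <= e <= 1 -> zonotope (shifted e).
  by move=> e e1; exists (fun q => l q + e * s * kron j q); split => //; apply: shift_ok.
have shE : forall e, shifted e = fun i => c i + k * (e * s) * gen G j i.
  by move=> e; rewrite /shifted (zpt_shift l (kron j) (e * s)) lincomb_kron // cl.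
have mid : c = vadd (vscale (1 - 1 / 2) (shifted 1)) (vscale (1 / 2) (shifted (-1))).
  by rewrite !shE; apply: functional_extensionality => i; rewrite /vadd /vscale; field.
have [ec _] := cext _ _ (1 / 2) (Zsh 1 ltac:(lra)) (Zsh (-1) ltac:(lra)) ltac:(lra) mid.
apply: gj; apply: functional_extensionality => i.
have := f_equal (fun f => f i) ec; rewrite shE /vzero => h.
by apply: (Rmult_eq_reg_l (k * (1 * s))); [rewrite Rmult_0_r; lra | nra].
Qed.

Lemma vertex_sign_rep c : vertex zonotope c ->
  exists l, [/\ admissible l, c = zpt l,
    forall j, (j < length G)%nat -> l j = 1 \/ l j = -1 &
    forall j, l j = 1 -> gen G j <> vzero n].
Proof.
move=> cv; have [[l0 [l0ad cl0]] _] := cv.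
pose l j := if excluded_middle_informative (gen G j = vzero n) then -1 else l0 j.
have lad : admissible l.
  by move=> j jN; rewrite /l; case: excluded_middle_informative => ? /=; [lra | apply: l0ad].
have cl : c = zpt l.
  rewrite cl0; apply: functional_extensionality => i; rewrite /zpt /lincomb; congr (_ + k * _).
  apply: eq_bigr => j _; rewrite /l; case: excluded_middle_informative => //= gj.
  by rewrite gj /vzero; ring.
exists l; split => // j.
- move=> jN; rewrite /l; case: excluded_middle_informative => /= gj; first by right.
  by have := vertex_extreme_coef cv lad cl jN gj; rewrite /l; case: excluded_middle_informative.
- by rewrite /l; case: excluded_middle_informative => //= _ e; lra.
Qed.

(* At a vertex, 0 is not a convex combination of the generators carrying
   coefficient 1: subtracting such a combination from the coefficients
   would give a representation with a non-extreme coefficient. *)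
Lemma vertex_no_zero_hull c l : vertex zonotope c -> admissible l -> c = zpt l ->
  (forall j, l j = 1 -> gen G j <> vzero n) ->
  ~ zero_in_hull (length G) (gen G) (fun j => Reqb (l j) 1).
Proof.
move=> cv lad cl lg [mu [mu0 musel mu1 mug]].
have mu_le1 : forall j, (j < length G)%nat -> mu j <= 1 by move=> j; apply: Rsum1_term_le1.
pose l' j := l j + -1 * mu j.
have l'ad : admissible l'.
  move=> j jN; rewrite /l'; case: (Req_EM_T (mu j) 0) => [->|/musel [/ReqbP lj _]].
    by have := lad j jN; lra.
  by have := mu_le1 j jN; have := mu0 j; lra.
have cl' : c = zpt l'.
  rewrite cl /l' zpt_shift; apply: functional_extensionality => i.
  by rewrite /lincomb mug; ring.
have [j [jN muj]] := Rsum1_nonzero mu1.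
have [/ReqbP lj _] := musel j muj.
have := vertex_extreme_coef cv l'ad cl' jN (lg j lj); rewrite /l' lj.
by have := mu_le1 j jN; have := mu0 j; case; lra.
Qed.

Lemma zonotope_step l (Q : vec n -> Prop) r t : admissible l ->
  (forall j, (j < length G)%nat -> Q (gen G j) -> l j = -1) ->
  convex_comb G Q r -> 0 <= t <= k -> zonotope (vadd (zpt l) (vscale t r)).
Proof.
move=> lad lQ [w [w0 wQ w1 ->]] t0k.
have tk : 0 <= t / k <= 1.
  split; first by apply: Rle_mult_inv_pos; lra.
  by apply: (Rmult_le_reg_r k) => //; rewrite /Rdiv Rmult_assoc Rinv_l; lra.
exists (fun j => l j + t / k * w j); split.
  move=> j jN; case: (Req_EM_T (w j) 0) => [->|/wQ /(lQ j jN) lj].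
    by rewrite Rmult_0_r Rplus_0_r; apply: lad.
  by rewrite lj; have := Rsum1_term_le1 w0 w1 jN; have := w0 j; nra.
rewrite zpt_shift; apply: functional_extensionality => i; rewrite /vadd /vscale; field; lra.
Qed.

(* At a vertex, Gordan's alternative either yields such a v
   separating the generators with coefficient 1 -- and its mode only uses
   generators with coefficient -1 -- or contradicts extremality. *)
Lemma zonotope_closed (M : finType) (Rset : M -> vec n -> Prop) :
  (forall v : vec n, exists m : M, forall r, Rset m r -> dot v r >= 0) ->
  (forall m r, Rset m r -> convex_comb G (Rset m) r) ->
  H_closed Rset zonotope.
Proof.
move=> modes gens c cv.
have [l [lad cl lpm lg]] := vertex_sign_rep cv.
case: (gordan (length G) (gen G) (fun j => Reqb (l j) 1)) => [[v vsep]|zh]; last first.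
  by case: (vertex_no_zero_hull cv lad cl lg).
have [m mv] := modes v.
exists m, k; split => // r t rR t0k; rewrite cl.
apply: (zonotope_step lad _ (gens m r rR) t0k) => j jN gjR.
case: (lpm j jN) => // lj.
by have := vsep j jN (proj2 (ReqbP _ _) lj); have := mv _ gjR; lra.
Qed.
End Zonotope.

(* Every rate set of a BMS is a bounded polyhedron with finitely many basic
   points; collecting them for all modes gives one finite list G of which
   each rate set is the convex hull. *)
Lemma rate_sets_generated (M : finType) n (Rset : M -> vec n -> Prop) :
  BMS Rset -> exists G : list (vec n), forall m r, Rset m r -> convex_comb G (Rset m) r.
Proof.
move=> [_ [_ HR]].
have polyhedral : forall m, exists HV : seq (vec n * R) * list (vec n),
    [/\ forall x, Rset m x <-> polyH HV.1 x, box_bounded (polyH HV.1) &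
        forall x, basic HV.1 x <-> List.In x HV.2].
  move=> m; have [_ [[H HH] [rho Hrho]]] := HR m; have [V HV] := basic_finite H.
  exists (H, V); split => //; exists (vzero n), rho => y /HH Py i.
  by rewrite /vzero Rminus_0_r; apply: Rle_trans (coord_le_norm y i) (Hrho y Py).
have [F FP] := ClassicalEpsilon.choice _ polyhedral.
exists (List.flat_map (fun m => (F m).2) (enum M)) => m r rR.
have [HF bndF VF] := FP m.
apply: (convex_comb_mono (Q := polyH (F m).1)) => [y /HF //|].
apply: polytope_convex_basic => //; last exact/HF.
move=> x /VF xV; apply/List.in_flat_map; exists m; split => //.
by apply: In_mem; rewrite mem_enum.
Qed.

(* Necessity: at a vertex minimizing v . x over the closed polytope, the
   rates of the mode that keeps the flow inside satisfy v . r >= 0. *)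
Lemma closed_polytope_modes (M : finType) n (Rset : M -> vec n -> Prop)
    (x0 : vec n) (gamma : R) (P : vec n -> Prop) :
  convex_polytope P -> H_closed Rset P -> P x0 ->
  (forall y, P y -> norm (vsub y x0) <= gamma) ->
  forall v : vec n, exists m : M, forall r, Rset m r -> dot v r >= 0.
Proof.
move=> Ppoly Hcl Px0 Pball v.
have bnd : box_bounded P.
  exists x0, gamma => y Py i; have := Pball y Py; have := coord_le_norm (vsub y x0) i.
  by rewrite /vsub; lra.
have [c [cv cmin]] := polytope_min_vertex v Ppoly bnd Px0.
have [m [tau [tau0 stay]]] := Hcl c cv.
exists m => r rR; have := cmin _ (stay r tau rR (conj (Rlt_le _ _ tau0) (Rle_refl _))).
rewrite /vadd /vscale dot_shift => h.
by apply: Rle_ge; apply: (Rmult_le_reg_l tau) => //; lra.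
Qed.

(* Sufficiency: a small zonotope around x0 generated by all vertices of the
   rate sets is an H-closed polytope inside the gamma-ball. *)
Lemma modes_closed_polytope (M : finType) n (Rset : M -> vec n -> Prop)
    (x0 : vec n) (gamma : R) :
  BMS Rset -> 0 < gamma ->
  (forall v : vec n, exists m : M, forall r, Rset m r -> dot v r >= 0) ->
  exists P : vec n -> Prop,
    [/\ convex_polytope P, H_closed Rset P, P x0 &
        forall y, P y -> norm (vsub y x0) <= gamma].
Proof.
move=> bms gamma0 modes; have [G gens] := rate_sets_generated bms.
set L := \big[Rplus/0]_(j < length G) \big[Rplus/0]_(i < n) Rabs (gen G j i).
have L0 : 0 <= L by apply: Rsum_ge0 => j; apply: Rsum_ge0 => i; apply: Rabs_pos.
set k := gamma / (1 + L).
have k0 : 0 < k by apply: Rdiv_lt_0_compat; lra.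
exists (zonotope x0 k G); split.
- exact: zonotope_polytope.
- exact: zonotope_closed.
- exists (fun _ => 0); split => [j _|]; first lra.
  apply: functional_extensionality => i; rewrite /zpt /lincomb big1 => [|j _]; ring.
- move=> y Zy; apply: Rle_trans (zonotope_norm (Rlt_le _ _ k0) Zy) _; rewrite -/L.
  have -> : k * L = gamma * (L / (1 + L)) by rewrite /k; field; lra.
  have : L / (1 + L) <= 1.
    by apply: (Rmult_le_reg_r (1 + L)); [lra | rewrite /Rdiv Rmult_assoc Rinv_l; lra].
  by nra.
Qed.

Theorem lemma1 (M : finType) (n : nat) (Rset : M -> vec n -> Prop)
  (x0 : vec n) (gamma : R) :
  BMS Rset -> 0 < gamma ->
  (exists P : vec n -> Prop,
      convex_polytope P /\ H_closed Rset P /\ P x0 /\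
      (forall y, P y -> norm (vsub y x0) <= gamma))
  <->
  (forall v : vec n, exists m : M, forall r, Rset m r -> dot v r >= 0).
Proof.
move=> bms gamma0; split.
- by move=> [P [Ppoly [Pcl [Px0 Pball]]]]; apply: closed_polytope_modes Pball.
- move=> modes; have [P [Ppoly Pcl Px0 Pball]] := modes_closed_polytope x0 bms gamma0 modes.
  by exists P.
Qed.
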